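(* Let $G$ be any graph and $s\geqslant 1$ an integer. Let $G^+=\pi(G_1,G_2)$, where $G_1,G_2$ are two disjoint copies of $G$. Then $G^+$ is $\mathbf{E_s}$ if and only if $G$ is $\mathbf{E_{s-1}}$.
   Context: All graphs are finite and simple. For two disjoint graphs $G$ and $H$, $\pi(G,H)$ is the graph obtained from the disjoint union of $G$ and $H$ by adding new vertices $\Pi_G=\{\pi_u: u\in V(G)\}$ and $\Pi_H=\{\pi_u:u\in V(H)\}$, making $(\Pi_G,\Pi_H)$ a complete bipartite graph (every vertex of $\Pi_G$ adjacent to every vertex of $\Pi_H$, no edges inside $\Pi_G$ or inside $\Pi_H$), and adding the edge $u\pi_u$ for each $u\in V(G)\cup V(H)$. For a positive integer $t$, a graph is $t$-extendable if every independent set of size exactly $t$ is contained in a maximum independent set. For $s\geqslant1$, a graph is $\mathbf{E_s}$ if it is $t$-extendable for every $t\in[s]$; by convention every graph is $\mathbf{E_0}$. *)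

(* Simple graphs as symmetric irreflexive relations on a finType. *)
From mathcomp Require Import all_boot.
Set Implicit Arguments. Unset Strict Implicit. Unset Printing Implicit Defensive.

Section Defs.
Variable T : finType.
Variable e : rel T.

Definition independent (S : {set T}) : Prop :=
  forall x y, x \in S -> y \in S -> ~~ e x y.

Definition max_independent (S : {set T}) : Prop :=
  independent S /\ forall S' : {set T}, independent S' -> #|S'| <= #|S|.

Definition extendable (t : nat) : Prop :=
  forall S : {set T}, independent S -> #|S| = t ->
    exists M : {set T}, max_independent M /\ S \subset M.

(* E_s: t-extendable for every t in [s] = {1,...,s}; E_0 holds vacuously. *)
Definition E_s (s : nat) : Prop :=
  forall t, 1 <= t <= s -> extendable t.
End Defs.

(* pi(G,H): vertices (x, false) are the vertices x of G + H (disjoint union,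
   inl for G, inr for H); vertices (x, true) are the new vertices pi_x. *)
Definition pi_rel (T1 T2 : finType) (e1 : rel T1) (e2 : rel T2)
  : rel ((T1 + T2) * bool) :=
  fun a b =>
    match a, b with
    | (inl u, false), (inl v, false) => e1 u v
    | (inr u, false), (inr v, false) => e2 u v
    | (x, false), (y, true) => x == y
    | (x, true), (y, false) => x == y
    | (inl _, true), (inr _, true) => true
    | (inr _, true), (inl _, true) => true
    | _, _ => false
    end.

From mathcomp Require Import all_boot zify.
Set Implicit Arguments. Unset Strict Implicit. Unset Printing Implicit Defensive.

(* An independent set of pi(G,G) is described by its traces A1, A2 on the two
   copies of G and P1, P2 on Pi_G1, Pi_G2 (read as subsets of V(G)): A1 and A2
   are independent in G, A_i misses P_i, and P1 or P2 is empty because Pi_G1 and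
   Pi_G2 are completely joined.  Hence alpha(pi(G,G)) = |V(G)| + alpha(G), and
   a set with P2 empty is maximum iff A2 is maximum in G and P1 is the
   complement of A1 (symmetrically for P1 empty).

   An independent set with at most s vertices has a side i with P_i empty and
   |A_i| <= s - 1 (if P2 is empty but |A2| >= s, the set lies inside the second
   copy and side 1 qualifies), and it extends to a maximum set as soon as A_i
   extends to a maximum independent set of G.  Conversely, an independent t-set S of G placed
   in the second copy, together with one vertex of Pi_G1, only extends to
   maximum sets with P2 empty, whose trace on the second copy is a maximum
   independent set of G containing S. *)

Section IndependentSets.
Variables (U : finType) (r : rel U).

Definition extends_to_max (S : {set U}) : Prop :=
  exists M, max_independent r M /\ S \subset M.

Lemma independentP (S : {set U}) :
  reflect (independent r S) [forall x in S, forall y in S, ~~ r x y].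
Proof.
apply: (iffP forall_inP) => [h x y xS yS | h x xS].
  by have /forall_inP := h x xS; apply.
by apply/forall_inP => y; apply: h.
Qed.

Lemma independent_set0 : independent r set0.
Proof. by move=> x y; rewrite inE. Qed.

Lemma exists_max_independent : exists M, max_independent r M.
Proof.
pose indepb (S : {set U}) := [forall x in S, forall y in S, ~~ r x y].
have indep0 : indepb set0 by apply/independentP/independent_set0.
have [M /independentP M_indep M_max] :=
  arg_maxnP (fun S : {set U} => #|S|) indep0.
by exists M; split=> // S /independentP; apply: M_max.
Qed.

Lemma max_independent_card (W M : {set U}) :
  max_independent r W -> max_independent r M <-> independent r M /\ #|M| = #|W|.
Proof.
move=> [W_indep W_max]; split=> [[M_indep M_max] | [M_indep M_W]].
  by split=> //; apply/eqP; rewrite eqn_leq W_max // M_max.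
by split=> // S S_indep; rewrite M_W W_max.
Qed.

Lemma extends_to_max_E_s s (S : {set U}) :
  E_s r s -> independent r S -> #|S| <= s -> extends_to_max S.
Proof.
move=> Es S_indep Ss; have [/cards0_eq -> | S_gt0] := posnP #|S|.
  by have [M M_max] := exists_max_independent; exists M; rewrite sub0set.
by apply: (Es #|S|); rewrite ?S_gt0.
Qed.

Variable f : U -> U.
Hypotheses (fK : involutive f) (f_mono : {mono f : x y / r x y}).

Lemma independent_preim (S : {set U}) :
  independent r S -> independent r (f @^-1: S).
Proof. by move=> S_indep x y; rewrite !inE -f_mono; apply: S_indep. Qed.

Lemma max_independent_preim (M : {set U}) :
  max_independent r M -> max_independent r (f @^-1: M).
Proof.
have f_inj := can_inj fK.
move=> [M_indep M_max]; split=> [|S S_indep]; first exact: independent_preim.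
by rewrite card_preimset // -(card_preimset S f_inj); apply/M_max/independent_preim.
Qed.

Lemma extends_to_max_preim (S : {set U}) :
  extends_to_max (f @^-1: S) -> extends_to_max S.
Proof.
move=> [M [M_max sSM]]; exists (f @^-1: M); split; first exact: max_independent_preim.
by apply/subsetP => x xS; rewrite inE (subsetP sSM) // inE fK.
Qed.

End IndependentSets.

Lemma card_disjoint_leq (U : finType) (A B : {set U}) :
  [disjoint A & B] -> #|A| + #|B| <= #|U|.
Proof.
by rewrite disjoints_subset -(cardsC B) addnC leq_add2l; apply: subset_leq_card.
Qed.

Section PiGraph.
Variables (T : finType) (e : rel T).
Local Notation V := ((T + T) * bool)%type.
Local Notation E := (pi_rel e e).

Definition onG1 (M : {set V}) := [set u | (inl u, false) \in M].
Definition onG2 (M : {set V}) := [set u | (inr u, false) \in M].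
Definition onPi1 (M : {set V}) := [set u | (inl u, true) \in M].
Definition onPi2 (M : {set V}) := [set u | (inr u, true) \in M].

Definition piset (A1 A2 P1 P2 : {set T}) : {set V} :=
  [set x | match x with
           | (inl u, false) => u \in A1
           | (inr u, false) => u \in A2
           | (inl u, true) => u \in P1
           | (inr u, true) => u \in P2
           end].

Lemma pisetE (M : {set V}) : piset (onG1 M) (onG2 M) (onPi1 M) (onPi2 M) = M.
Proof. by apply/setP => -[[u|u] []]; rewrite !inE. Qed.

Lemma independent_piset (A1 A2 P1 P2 : {set T}) :
  independent E (piset A1 A2 P1 P2) <->
  [/\ independent e A1, independent e A2, [disjoint A1 & P1], [disjoint A2 & P2]
    & (P1 == set0) || (P2 == set0)].
Proof.
split=> [indep | [indep1 indep2 dis1 dis2 P0]].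
  split.
  - by move=> u v uA vA; apply: (indep (inl u, false) (inl v, false)); rewrite inE.
  - by move=> u v uA vA; apply: (indep (inr u, false) (inr v, false)); rewrite inE.
  - rewrite disjoints_subset; apply/subsetP => u uA; rewrite inE; apply/negP => uP.
    have := indep (inl u, false) (inl u, true).
    by rewrite !inE uA uP /= eqxx => /(_ isT isT).
  - rewrite disjoints_subset; apply/subsetP => u uA; rewrite inE; apply/negP => uP.
    have := indep (inr u, false) (inr u, true).
    by rewrite !inE uA uP /= eqxx => /(_ isT isT).
  - have [-> | [u uP]] := set_0Vmem P1; first by rewrite eqxx.
    apply/orP; right; apply/eqP/setP => v; rewrite inE; apply/negP => vP.
    have := indep (inl u, true) (inr v, true).
    by rewrite !inE uP vP => /(_ isT isT).
move=> [[u|u] []] [[v|v] []]; rewrite !inE /= => xM yM //.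
all: try exact: indep1; try exact: indep2.
all: try by case/orP: P0 => /eqP P0; move: xM yM; rewrite P0 inE.
all: apply/eqP => -[uv]; subst v; move: xM yM.
all: by [move/(disjointFr dis1)-> | move/(disjointFl dis1)->
       | move/(disjointFr dis2)-> | move/(disjointFl dis2)->].
Qed.

Lemma card_pi (M : {set V}) :
  #|M| = #|onG1 M| + #|onG2 M| + #|onPi1 M| + #|onPi2 M|.
Proof.
rewrite -sum1_card big_mkcond.
rewrite (eq_bigr (fun x : V => if (x.1, x.2) \in M then 1 else 0)) => [|[] //].
rewrite -(pair_bigA _ (fun a b => if (a, b) \in M then 1 else 0)) big_sumType /=.
rewrite !(eq_bigr _ (fun u _ => big_bool _ _)) /= !big_split /=.
rewrite -!big_mkcond /= !sum1dep_card.
by rewrite -/(onG1 M) -/(onG2 M) -/(onPi1 M) -/(onPi2 M); lia.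
Qed.

Lemma card_piset (A1 A2 P1 P2 : {set T}) :
  #|piset A1 A2 P1 P2| = #|A1| + #|A2| + #|P1| + #|P2|.
Proof.
by rewrite card_pi; congr (_ + _ + _ + _); apply: eq_card => u; rewrite !inE.
Qed.

Lemma pisetS (A1 A2 P1 P2 B1 B2 Q1 Q2 : {set T}) :
  A1 \subset B1 -> A2 \subset B2 -> P1 \subset Q1 -> P2 \subset Q2 ->
  piset A1 A2 P1 P2 \subset piset B1 B2 Q1 Q2.
Proof.
by move=> sA1 sA2 sP1 sP2; apply/subsetP => -[[u|u] []]; rewrite !inE; apply: subsetP.
Qed.

Lemma independent_pi (M : {set V}) : independent E M ->
  [/\ independent e (onG1 M), independent e (onG2 M), [disjoint onG1 M & onPi1 M],
      [disjoint onG2 M & onPi2 M] & (onPi1 M == set0) || (onPi2 M == set0)].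
Proof. by rewrite -{1}[M]pisetE => /independent_piset. Qed.

Definition swap_copies (x : V) : V :=
  (match x.1 with inl u => inr u | inr u => inl u end, x.2).

Lemma swap_copiesK : involutive swap_copies.
Proof. by case=> -[]. Qed.

Lemma pi_rel_swap : {mono swap_copies : x y / E x y}.
Proof. by case=> -[] u [] [] -[] v []. Qed.

Lemma onG2_swap (M : {set V}) : onG2 (swap_copies @^-1: M) = onG1 M.
Proof. by apply/setP => u; rewrite !inE. Qed.

Lemma onPi2_swap (M : {set V}) : onPi2 (swap_copies @^-1: M) = onPi1 M.
Proof. by apply/setP => u; rewrite !inE. Qed.

Lemma pi_small_side s (S : {set V}) : independent E S -> #|S| <= s.+1 ->
  (onPi2 S = set0 /\ #|onG2 S| <= s) \/ (onPi1 S = set0 /\ #|onG1 S| <= s).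
Proof.
move=> /independent_pi[_ _ _ _ P0]; rewrite card_pi.
case/orP: P0 => /eqP P0; rewrite P0 cards0 => cardS.
  have [small | big] := leqP #|onG1 S| s; [by right | left].
  by split; [apply/cards0_eq | ]; lia.
have [small | big] := leqP #|onG2 S| s; [by left | right].
by split; [apply/cards0_eq | ]; lia.
Qed.

Variables (K : {set T}) (K_max : max_independent e K).

Lemma card_independent_pi (M : {set V}) :
  independent E M -> #|M| <= #|T| + #|K|.
Proof.
move=> /independent_pi[indep1 indep2 dis1 dis2 P0]; rewrite card_pi.
have := card_disjoint_leq dis1; have := card_disjoint_leq dis2.
have := K_max.2 _ indep1; have := K_max.2 _ indep2.
by case/orP: P0 => /eqP ->; rewrite cards0; lia.
Qed.

Lemma max_independent_pi (M : {set V}) :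
  max_independent E M <-> independent E M /\ #|M| = #|T| + #|K|.
Proof.
pose W := piset set0 K setT set0.
have cardW : #|W| = #|T| + #|K| by rewrite card_piset !cards0 cardsT addn0 addnC.
have W_max : max_independent E W.
  split=> [|S /card_independent_pi]; last by rewrite cardW.
  apply/independent_piset; split; [exact: independent_set0 | exact: K_max.1 | | |].
  - by rewrite -setI_eq0 set0I.
  - by rewrite -setI_eq0 setI0.
  - by rewrite eqxx orbT.
by rewrite -cardW; apply: max_independent_card.
Qed.

Lemma max_independent_onG2 (M : {set V}) :
  max_independent E M -> onPi2 M = set0 -> max_independent e (onG2 M).
Proof.
move=> /max_independent_pi[M_indep cardM] P2_0.
have [_ indep2 dis1 _ _] := independent_pi M_indep.
split=> // S /K_max.2; have := card_disjoint_leq dis1.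
by move: cardM; rewrite card_pi P2_0 cards0; lia.
Qed.

Lemma extends_to_max_pi (S : {set V}) (K2 : {set T}) :
  independent E S -> onPi2 S = set0 -> max_independent e K2 ->
  onG2 S \subset K2 -> extends_to_max E S.
Proof.
move=> S_indep P2_0 K2_max sG2K2.
have [_ K2K] := (max_independent_card K2 K_max).1 K2_max.
have [indep1 _ dis1 _ _] := independent_pi S_indep.
exists (piset (onG1 S) K2 (~: onG1 S) set0); split.
  apply/max_independent_pi; split.
    apply/independent_piset; split=> //; first exact: K2_max.1.
    - by rewrite disjoints_subset setCK.
    - by rewrite -setI_eq0 setI0.
    - by rewrite eqxx orbT.
  by rewrite card_piset cards0 addn0 addnAC cardsC K2K.
rewrite -{1}[S]pisetE P2_0; apply: pisetS => //.
by rewrite -disjoints_subset disjoint_sym.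
Qed.

Lemma extends_to_max_pi_E_s s (S : {set V}) :
  E_s e s -> independent E S -> #|S| <= s.+1 -> extends_to_max E S.
Proof.
move=> Es S_indep cardS; have [indep1 indep2 _ _ _] := independent_pi S_indep.
have [[P2_0 small] | [P1_0 small]] := pi_small_side S_indep cardS.
  have [K2 [K2_max sG2K2]] := extends_to_max_E_s Es indep2 small.
  exact: extends_to_max_pi K2_max sG2K2.
apply: (extends_to_max_preim swap_copiesK pi_rel_swap).
have [K2 [K2_max sG2K2]] := extends_to_max_E_s Es indep1 small.
apply: extends_to_max_pi K2_max _; rewrite ?onG2_swap ?onPi2_swap //.
exact: (independent_preim pi_rel_swap S_indep).
Qed.

Lemma E_s_of_pi s : E_s E s.+1 -> E_s e s.
Proof.
move=> Epi t /andP[t_gt0 t_le] S S_indep cardS.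
have /card_gt0P[u uS] : 0 < #|S| by rewrite cardS.
pose S' := piset set0 S [set u] set0.
have S'_indep : independent E S'.
  apply/independent_piset; split=> //; first exact: independent_set0.
  - by rewrite -setI_eq0 set0I.
  - by rewrite -setI_eq0 setI0.
  - by rewrite eqxx orbT.
have [M [M_max sS'M]] : extends_to_max E S'.
  apply: (Epi t.+1) => //.
  by rewrite card_piset !cards0 cards1 cardS addn0 add0n addn1.
have P2_0 : onPi2 M = set0.
  have uP1 : u \in onPi1 M by rewrite inE (subsetP sS'M) // !inE.
  have [_ _ _ _ /orP[/eqP P1_0 | /eqP //]] := independent_pi M_max.1.
  by rewrite P1_0 inE in uP1.
exists (onG2 M); split; first exact: max_independent_onG2.
by apply/subsetP => v vS; rewrite inE (subsetP sS'M) // inE.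
Qed.

End PiGraph.

Theorem lemma3 (T : finType) (e : rel T) (e_sym : symmetric e)
  (e_irr : irreflexive e) (s : nat) (hs : 1 <= s) :
  E_s (pi_rel e e) s <-> E_s e s.-1.
Proof.
have [K K_max] := exists_max_independent e.
case: s hs => // s _; split; first exact: (E_s_of_pi K_max).
move=> Es t /andP[_ t_le] S S_indep cardS.
by apply: (extends_to_max_pi_E_s K_max Es S_indep); rewrite cardS.
Qed.
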